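(* Let $f:\mathbb{R}^n \to \mathbb{R}$ be strongly convex and let $C \subset \mathbb{R}^n$ be a nonempty closed convex set. (a) For all $x \in \mathbb{R}^n$, $x^* \in \partial f(x)$ and $y^* \in \partial f\big(P_C(x)\big)$ we have \[ \operatorname{dist}_f^{x^*}(x,C)^2 \le \|x^*-y^*\|_2 \cdot \operatorname{dist}(x,C). \] (b) If $f$ is differentiable with an $L$-Lipschitz-continuous gradient, then for all $x \in \mathbb{R}^n$ \[ \operatorname{dist}_f(x,C)^2 \le \tfrac{L}{2} \cdot \operatorname{dist}(x,C)^2 . \]
   Context: A convex $f:\mathbb{R}^n\to\mathbb{R}$ is $\alpha$-strongly convex ($\alpha>0$) if $f(y)\ge f(x)+\langle x^*,y-x\rangle+\frac{\alpha}{2}\|y-x\|_2^2$ for all $x,y$ and all $x^*\in\partial f(x)$; strongly convex means $\alpha$-strongly convex for some $\alpha>0$. For $x^*\in\partial f(x)$ the Bregman distance is $D_f^{x^*}(x,y)=f(y)-f(x)-\langle x^*,y-x\rangle$; for a nonempty closed convex set $C$, $\operatorname{dist}_f^{x^*}(x,C)^2:=\min_{y\in C}D_f^{x^*}(x,y)$ (the minimizer, the Bregman projection, exists and is unique). If $f$ is differentiable, the superscript $x^*=\nabla f(x)$ is dropped and one writes $\operatorname{dist}_f(x,C)$. $P_C$ denotes the orthogonal (Euclidean) projection onto $C$ and $\operatorname{dist}(x,C)$ the Euclidean distance. *)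

From HB Require Import structures.
From mathcomp Require Import all_boot all_order all_algebra.
From mathcomp Require Import all_classical all_reals all_analysis.
Set Implicit Arguments. Unset Strict Implicit. Unset Printing Implicit Defensive.
Import Order.TTheory GRing.Theory Num.Theory.
Import numFieldNormedType.Exports.
Local Open Scope classical_set_scope.
Local Open Scope ring_scope.

Section Defs.
Variables (R : realType) (n : nat).
Implicit Types (x y z p xs : 'rV[R]_n) (f : 'rV[R]_n -> R) (C : set 'rV[R]_n).

Definition edot x y : R := \sum_(i < n) x 0 i * y 0 i.
Definition enorm x : R := Num.sqrt (edot x x).

Definition eucl_dist x C : R := inf [set enorm (x - y) | y in C].

Definition is_proj C x p : Prop := C p /\ forall z, C z -> enorm (x - p) <= enorm (x - z).

Definition is_subgrad f x xs : Prop := forall y, f x + edot xs (y - x) <= f y.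

Definition cvx_fun f : Prop :=
  forall x y (t : R), 0 <= t <= 1 -> f (t *: x + (1 - t) *: y) <= t * f x + (1 - t) * f y.

Definition cvx_set C : Prop :=
  forall x y (t : R), 0 <= t <= 1 -> C x -> C y -> C (t *: x + (1 - t) *: y).

Definition strongly_convex_with f (alpha : R) : Prop :=
  cvx_fun f /\ 0 < alpha /\
  forall x y xs, is_subgrad f x xs ->
    f x + edot xs (y - x) + alpha / 2 * enorm (y - x) ^+ 2 <= f y.

Definition strongly_convex f : Prop := exists alpha : R, strongly_convex_with f alpha.

Definition bregman f xs x y : R := f y - f x - edot xs (y - x).

(* dist_f^{x^*}(x, C)^2 := min_{y in C} D_f^{x^*}(x,y), written as an infimum *)
Definition bdist2 f xs x C : R := inf [set bregman f xs x y | y in C].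

Definition is_gradient f x (g : 'rV[R]_n) : Prop :=
  differentiable f x /\ forall h, 'd f x h = edot g h.

End Defs.

(* (a) Bound the infimum by its value at y = P_C(x): the subgradient inequality
   at P_C(x) gives D_f^{x*}(x, P_C x) <= <x* - y*, x - P_C x>, and Cauchy-Schwarz
   with dist(x, C) = |x - P_C x| concludes.
   (b) The descent lemma D_f(x, y) <= L/2 |x - y|^2 holds for every y, so
   dist_f(x, C)^2 <= L/2 |x - y|^2 for all y in C; pass to the infimum over y. *)
From HB Require Import structures.
From mathcomp Require Import all_boot all_order all_algebra.
From mathcomp Require Import all_classical all_reals all_analysis.
From mathcomp Require Import lra.
Set Implicit Arguments. Unset Strict Implicit. Unset Printing Implicit Defensive.
Import Order.TTheory GRing.Theory Num.Theory.
Import numFieldNormedType.Exports.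
Local Open Scope classical_set_scope.
Local Open Scope ring_scope.

Section EuclideanSpace.
Variables (R : realType) (n : nat).
Implicit Types (x y z : 'rV[R]_n) (a : R).

Lemma edotC x y : edot x y = edot y x.
Proof. by apply: eq_bigr => i _; rewrite mulrC. Qed.

Lemma edotDl x y z : edot (x + y) z = edot x z + edot y z.
Proof. by rewrite /edot -big_split; apply: eq_bigr => i _; rewrite !mxE mulrDl. Qed.

Lemma edotZl a x z : edot (a *: x) z = a * edot x z.
Proof. by rewrite /edot mulr_sumr; apply: eq_bigr => i _; rewrite !mxE mulrA. Qed.

Lemma edotNl x z : edot (- x) z = - edot x z.
Proof. by rewrite -scaleN1r edotZl mulN1r. Qed.

Lemma edotBl x y z : edot (x - y) z = edot x z - edot y z.
Proof. by rewrite edotDl edotNl. Qed.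

Lemma edotZr a x z : edot z (a *: x) = a * edot z x.
Proof. by rewrite ![edot z _]edotC edotZl. Qed.

Lemma edotNr x z : edot z (- x) = - edot z x.
Proof. by rewrite ![edot z _]edotC edotNl. Qed.

Lemma edotBr x y z : edot z (x - y) = edot z x - edot z y.
Proof. by rewrite ![edot z _]edotC edotBl. Qed.

Lemma edot_ge0 x : 0 <= edot x x.
Proof. by apply: sumr_ge0 => i _; rewrite -expr2 sqr_ge0. Qed.

Lemma edot_eq0l x y : edot x x = 0 -> edot x y = 0.
Proof.
move/psumr_eq0P => x_eq0; rewrite /edot big1 // => i _.
have /eqP : x 0 i * x 0 i = 0 by apply: x_eq0 => // j _; rewrite -expr2 sqr_ge0.
by rewrite mulf_eq0 orbb => /eqP ->; rewrite mul0r.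
Qed.

Lemma enorm_ge0 x : 0 <= enorm x.
Proof. exact: sqrtr_ge0. Qed.

Lemma enorm_sqr x : enorm x ^+ 2 = edot x x.
Proof. by rewrite sqr_sqrtr // edot_ge0. Qed.

Lemma enormZ a x : enorm (a *: x) = `|a| * enorm x.
Proof. by rewrite /enorm edotZl edotZr mulrA -expr2 sqrtrM ?sqr_ge0 // sqrtr_sqr. Qed.

Lemma enormN x : enorm (- x) = enorm x.
Proof. by rewrite -scaleN1r enormZ normrN normr1 mul1r. Qed.

(* Cauchy-Schwarz, from [0 <= |b x - a y|^2] with [a = |x|] and [b = |y|]. *)
Lemma edot_le_enorm x y : edot x y <= enorm x * enorm y.
Proof.
set a := enorm x; set b := enorm y.
have [x0 | a_neq0] := eqVneq a 0.
  by rewrite edot_eq0l ?x0 ?mul0r // -enorm_sqr -/a x0 expr0n.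
have [y0 | b_neq0] := eqVneq b 0.
  by rewrite edotC edot_eq0l ?y0 ?mulr0 // -enorm_sqr -/b y0 expr0n.
have ab_gt0 : 0 < a * b by rewrite mulr_gt0 // lt_def ?a_neq0 ?b_neq0 enorm_ge0.
have := edot_ge0 (b *: x - a *: y).
rewrite !(edotBl, edotBr, edotZl, edotZr) -!enorm_sqr -/a -/b [edot y x]edotC => sq_ge0.
by rewrite -subr_ge0 -(pmulr_rge0 _ ab_gt0); nra.
Qed.

End EuclideanSpace.

Section Infimum.
Variable R : realType.
Implicit Types (S : set R) (a b K : R).

(* [inf S] is [0] when [S] has no lower bound, hence the hypothesis [0 <= b]. *)
Lemma inf_le_ge0 S a b : S a -> a <= b -> 0 <= b -> inf S <= b.
Proof.
move=> Sa ab b_ge0; have [S_lb | S_nlb] := pselect (has_lbound S).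
  exact: le_trans (ge_inf S_lb Sa) ab.
by rewrite inf_out // => -[].
Qed.

Lemma le_mul_sqr_inf S K b : S !=set0 -> (forall s, S s -> 0 <= s) ->
  (forall s, S s -> b <= K * s ^+ 2) -> b <= K * inf S ^+ 2.
Proof.
move=> [s0 Ss0] S_ge0 bS.
have inf_ge0 : 0 <= inf S by apply: lb_le_inf; [exists s0 | exact: S_ge0].
have [K_lt0 | K_ge0] := ltP K 0.
  apply: le_trans (bS _ Ss0) _; rewrite ler_nM2l // ler_sqr ?nnegrE ?inf_ge0 ?S_ge0 //.
  by apply: ge_inf Ss0; exists 0.
have [b_le0 | b_gt0] := leP b 0.
  exact: le_trans b_le0 (mulr_ge0 K_ge0 (sqr_ge0 _)).
have K_gt0 : 0 < K.
  rewrite lt_def K_ge0 andbT; apply: contra_ltN b_gt0 => /eqP K0.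
  by have := bS _ Ss0; rewrite K0 mul0r.
have bK_ge0 : 0 <= K^-1 * b by rewrite mulr_ge0 ?invr_ge0 ?ltW.
rewrite -ler_pdivrMl // -(sqr_sqrtr bK_ge0) ler_sqr ?nnegrE ?sqrtr_ge0 //.
apply: lb_le_inf => [|s Ss]; first by exists s0.
by rewrite -ler_sqr ?nnegrE ?sqrtr_ge0 ?S_ge0 // sqr_sqrtr // ler_pdivrMl // bS.
Qed.

End Infimum.

Section BregmanDistance.
Variables (R : realType) (n : nat).
Implicit Types (x y p xs ys : 'rV[R]_n) (f : 'rV[R]_n -> R) (C : set 'rV[R]_n).

Lemma eucl_dist_proj C x p : is_proj C x p -> eucl_dist x C = enorm (x - p).
Proof.
move=> [Cp p_min]; apply/eqP; rewrite eq_le; apply/andP; split.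
  by apply: ge_inf; [exists 0 => _ [y _ <-]; exact: enorm_ge0 | exists p].
by apply: lb_le_inf => [|_ [y Cy <-]]; [exists (enorm (x - p)), p | exact: p_min].
Qed.

Lemma bdist2_le f xs x C y (b : R) :
  C y -> bregman f xs x y <= b -> 0 <= b -> bdist2 f xs x C <= b.
Proof. by move=> Cy; apply: inf_le_ge0; exists y. Qed.

Lemma bregman_le_subgrad f xs x p ys :
  is_subgrad f p ys -> bregman f xs x p <= edot (xs - ys) (x - p).
Proof.
move=> /(_ x) ys_subgrad.
by rewrite /bregman edotBl -[p - x]opprB edotNr; lra.
Qed.

End BregmanDistance.

Section DescentLemma.
Variables (R : realType) (n : nat) (f : 'rV[R]_n -> R) (g : 'rV[R]_n -> 'rV[R]_n) (L : R).
Hypothesis f_grad : forall x, is_gradient f x (g x).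
Hypothesis g_lip : forall x y, enorm (g x - g y) <= L * enorm (x - y).
Implicit Types (x y h : 'rV[R]_n) (t : R).

Lemma lipschitz_bound_ge0 x y : 0 <= L * enorm (x - y).
Proof. exact: le_trans (enorm_ge0 _) (g_lip x y). Qed.

Lemma is_derive_along x h t :
  is_derive t 1 (fun s => f (x + s *: h)) (edot (g (x + t *: h)) h).
Proof.
set p := x + t *: h.
have shiftE : (fun s : R => s^-1 *: (f (x + (s *: 1 + t) *: h) - f p)) =
              (fun s => s^-1 *: ((f \o shift p) (s *: h) - f p)).
  by apply/funext => s /=; rewrite /p [s *: 1]mulr1 scalerDl addrCA.
have [f_diff dfE] := f_grad p.
apply: DeriveDef; first by rewrite /derivable shiftE; exact: diff_derivable.
by rewrite /derive shiftE; have := deriveE h f_diff; rewrite /derive => ->.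
Qed.

Lemma edot_grad_increment_le x h t :
  0 <= t -> edot (g (x + t *: h) - g x) h <= L * t * enorm h ^+ 2.
Proof.
move=> t_ge0; apply: le_trans (edot_le_enorm _ _) _.
rewrite expr2 mulrA; apply: ler_wpM2r; first exact: enorm_ge0.
by apply: le_trans (g_lip _ _) _; rewrite addrAC subrr add0r enormZ ger0_norm // mulrA.
Qed.

(* Mean value theorem applied to [t |-> f (x + t h) - t <g x, h> - t^2 L/2 |h|^2]
   on [0, 1], whose derivative is nonpositive on [0, 1]. *)
Lemma bregman_le_lipschitz x y : bregman f (g x) x y <= L / 2 * enorm (x - y) ^+ 2.
Proof.
set h := y - x; set c := edot (g x) h; set K := L / 2 * enorm h ^+ 2.
pose psi := (fun s => f (x + s *: h)) - c \*: id - K \*: (id * id).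
pose dpsi t := edot (g (x + t *: h)) h - c *: 1 - K *: (t *: 1 + t *: 1).
have psi_derive t : is_derive t 1 psi (dpsi t).
  by apply: is_deriveB; apply: is_deriveB; exact: is_derive_along.
have psi_cont : {within `[0, 1], continuous psi}.
  by apply: derivable_within_continuous => t _; case: (psi_derive t).
have [t0 t0_in psi01] := MVT ltr01 (fun t _ => psi_derive t) psi_cont.
have t0_ge0 : 0 <= t0 by move: t0_in; rewrite in_itv /= => /andP[/ltW].
have dpsi_le0 : dpsi t0 <= 0.
  have := edot_grad_increment_le x h t0_ge0.
  by rewrite /dpsi /K /c edotBl /GRing.scale /= !mulr1; lra.
have psiE s : psi s = f (x + s *: h) - c * s - K * (s * s) by [].
move: psi01; rewrite !psiE subr0 mulr1 scale0r addr0 scale1r.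
have -> : x + h = y by rewrite addrC subrK.
move=> psi01.
by rewrite /bregman -/h -/c -[x - y]opprB enormN -/h -/K; lra.
Qed.

End DescentLemma.

Theorem lemma3p3 (R : realType) (n : nat) (f : 'rV[R]_n -> R) (C : set 'rV[R]_n) :
  strongly_convex f -> C !=set0 -> closed C -> cvx_set C ->
  (forall (x xs p ys : 'rV[R]_n),
      is_subgrad f x xs -> is_proj C x p -> is_subgrad f p ys ->
      bdist2 f xs x C <= enorm (xs - ys) * eucl_dist x C) /\
  (forall (L : R) (g : 'rV[R]_n -> 'rV[R]_n),
      (forall x, is_gradient f x (g x)) ->
      (forall x y, enorm (g x - g y) <= L * enorm (x - y)) ->
      forall x, bdist2 f (g x) x C <= L / 2 * eucl_dist x C ^+ 2).
Proof.
move=> _ [y0 Cy0] _ _; split.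
  move=> x xs p ys _ x_proj p_subgrad; rewrite (eucl_dist_proj x_proj).
  apply: bdist2_le (proj1 x_proj) _ _; last by rewrite mulr_ge0 ?enorm_ge0.
  exact: le_trans (bregman_le_subgrad _ _ p_subgrad) (edot_le_enorm _ _).
move=> L g f_grad g_lip x; rewrite /eucl_dist.
apply: le_mul_sqr_inf => [|_ [y _ <-]|_ [y Cy <-]].
- by exists (enorm (x - y0)), y0.
- exact: enorm_ge0.
- apply: bdist2_le Cy (bregman_le_lipschitz f_grad g_lip x y) _.
  have := lipschitz_bound_ge0 g_lip x y; have := enorm_ge0 (x - y); nra.
Qed.
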